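(* Let $W$ be an sc-Banach space, $E=\mathbb R^n\oplus W$, $C=[0,\infty)^n\oplus W$, identify $W$ with $\{0\}\oplus W$, and let $N$ be a finite-dimensional subspace of $E$ in good position to $C$. Let $\Sigma=\bigcup_{a\in C\cap N,\,a\neq0}\sigma_a$, $\Sigma^c=\{1,\dots,n\}\setminus\Sigma$, and let $\widetilde N$ be an algebraic complement of $N\cap W$ in $N$. Then either $\widetilde N\cap(\mathbb R^{\Sigma^c}\oplus W)=\{0\}$ or $\widetilde N\subset\mathbb R^{\Sigma^c}\oplus W$; in the second case $\dim\widetilde N=1$ and $\Sigma=\emptyset$.
   Context: An sc-Banach space is a Banach space $W$ with nested Banach spaces $W=W_0\supset W_1\supset\cdots$, compact inclusions $W_n\to W_m$ ($m<n$), $\bigcap W_m$ dense in each $W_m$; $E$ has levels $\mathbb R^n\oplus W_m$ and $\|\cdot\|$ is its level-$0$ norm. For $a=(a_1,\dots,a_n,a_\infty)\in C$, $\sigma_a=\{i\in\{1,\dots,n\}: a_i=0\}$; for $S\subset\{1,\dots,n\}$, $\mathbb R^S=\{x\in\mathbb R^n:x_j=0\text{ for } j\notin S\}$. An sc-complement of $N$ is a closed subspace $N^\perp$ with $E_m=(N\cap E_m)\oplus(N^\perp\cap E_m)$ topologically for all $m$, both sc-subspaces. $N$ is in good position to $C$ if $N\cap C$ has nonempty interior in $N$ and there exist an sc-complement $N^\perp$ and $c>0$ such that for every $(n,m)\in N\oplus N^\perp$ with $\|m\|\le c\|n\|$: $n+m\in C$ iff $n\in C$. *)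

From HB Require Import structures.
From mathcomp Require Import all_boot all_order all_algebra.
From mathcomp Require Export reals.
Set Implicit Arguments. Unset Strict Implicit. Unset Printing Implicit Defensive.
Import Order.TTheory GRing.Theory Num.Theory.
Local Open Scope ring_scope.

Section SC.
Variable R : realType.

Section Gen.
Variable V : lmodType R.

Definition is_lsubspace (S : V -> Prop) : Prop :=
  S 0 /\ (forall x y, S x -> S y -> S (x + y)) /\
  (forall (a : R) x, S x -> S (a *: x)).

Definition is_norm_on (S : V -> Prop) (nu : V -> R) : Prop :=
  (forall x, S x -> 0 <= nu x) /\
  (forall x, S x -> nu x = 0 -> x = 0) /\
  (forall (a : R) x, S x -> nu (a *: x) = `|a| * nu x) /\
  (forall x y, S x -> S y -> nu (x + y) <= nu x + nu y).

Definition cauchy_in (nu : V -> R) (u : nat -> V) : Prop :=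
  forall eps : R, 0 < eps -> exists M : nat,
    forall p q : nat, (M <= p)%N -> (M <= q)%N -> nu (u p - u q) < eps.

Definition converges_in (nu : V -> R) (u : nat -> V) (x : V) : Prop :=
  forall eps : R, 0 < eps -> exists M : nat,
    forall p : nat, (M <= p)%N -> nu (u p - x) < eps.
End Gen.

Record sc_structure (W : lmodType R) := SCStructure {
  sc_lvl : nat -> W -> Prop;
  sc_nrm : nat -> W -> R;
  sc_lvl0 : forall x, sc_lvl 0 x;
  sc_nested : forall m x, sc_lvl m.+1 x -> sc_lvl m x;
  sc_subspace : forall m, is_lsubspace (sc_lvl m);
  sc_normP : forall m, is_norm_on (sc_lvl m) (sc_nrm m);
  sc_complete : forall m (u : nat -> W), (forall j, sc_lvl m (u j)) ->
    cauchy_in (sc_nrm m) u -> exists x, sc_lvl m x /\ converges_in (sc_nrm m) u x;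
  sc_compact : forall m k, (m < k)%N -> forall u : nat -> W,
    (forall j, sc_lvl k (u j)) -> (exists B : R, forall j, sc_nrm k (u j) <= B) ->
    exists phi : nat -> nat, (forall j, (phi j < phi j.+1)%N) /\
      exists x, sc_lvl m x /\ converges_in (sc_nrm m) (fun j => u (phi j)) x;
  sc_dense : forall m x, sc_lvl m x -> forall eps : R, 0 < eps ->
    exists y, (forall k, sc_lvl k y) /\ sc_nrm m (x - y) < eps
}.

Variables (n : nat) (W : lmodType R) (sc : sc_structure W).

Definition E := ('rV[R]_n * W)%type.

Definition rvnorm (x : 'rV[R]_n) : R := \big[Num.max/0]_(i < n) `|x ord0 i|.

Definition Elvl (m : nat) (p : E) : Prop := sc_lvl sc m p.2.
Definition Enrm (m : nat) (p : E) : R := Num.max (rvnorm p.1) (sc_nrm sc m p.2).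
Definition Enorm (p : E) : R := Enrm 0 p.

Definition closed_in_lvl (F : E -> Prop) (m : nat) : Prop :=
  forall (u : nat -> E) (x : E), (forall j, F (u j) /\ Elvl m (u j)) ->
    Elvl m x -> converges_in (Enrm m) u x -> F x.

(* sc-subspace: closed linear subspace F whose induced filtration F_m = F /\ E_m
   is an sc-structure (F_m closed in E_m, F_infty dense in each F_m) *)
Definition sc_subspace_of (F : E -> Prop) : Prop :=
  is_lsubspace F /\ (forall m, closed_in_lvl F m) /\
  (forall m x, F x -> Elvl m x -> forall eps : R, 0 < eps ->
     exists y, F y /\ (forall k, Elvl k y) /\ Enrm m (x - y) < eps).

(* E_m = (A /\ E_m) (+) (B /\ E_m) topologically *)
Definition top_dsum_lvl (m : nat) (A B : E -> Prop) : Prop :=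
  (forall x, Elvl m x -> exists a b, A a /\ Elvl m a /\ B b /\ Elvl m b /\ x = a + b) /\
  (forall x, Elvl m x -> A x -> B x -> x = 0) /\
  (exists K : R, 0 < K /\ forall a b, A a -> Elvl m a -> B b -> Elvl m b ->
      Enrm m a <= K * Enrm m (a + b)).

Definition sc_complement (N Np : E -> Prop) : Prop :=
  sc_subspace_of N /\ sc_subspace_of Np /\ forall m, top_dsum_lvl m N Np.

Definition Cone (p : E) : Prop := forall i : 'I_n, 0 <= p.1 ord0 i.

Definition good_position (N : E -> Prop) : Prop :=
  (exists a, N a /\ Cone a /\ exists eps : R, 0 < eps /\
      forall b, N b -> Enorm (b - a) < eps -> Cone b) /\
  (exists (Np : E -> Prop) (c : R), sc_complement N Np /\ 0 < c /\
      forall x y, N x -> Np y -> Enorm y <= c * Enorm x ->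
        (Cone (x + y) <-> Cone x)).

Definition finite_dim (N : E -> Prop) : Prop :=
  exists (k : nat) (v : 'I_k -> E),
    forall x, N x <-> exists c : 'I_k -> R, x = \sum_(i < k) c i *: v i.

Definition inW (p : E) : Prop := p.1 = 0.

Definition sigma (a : E) (i : 'I_n) : Prop := a.1 ord0 i = 0.
Definition Sigma (N : E -> Prop) (i : 'I_n) : Prop :=
  exists a, Cone a /\ N a /\ a <> 0 /\ sigma a i.

Definition RSigmac_W (N : E -> Prop) (p : E) : Prop :=
  forall i : 'I_n, Sigma N i -> p.1 ord0 i = 0.

Definition alg_complement (S N Nt : E -> Prop) : Prop :=
  is_lsubspace Nt /\ (forall x, Nt x -> N x) /\
  (forall x, Nt x -> S x -> x = 0) /\
  (forall x, N x -> exists y z, Nt y /\ S z /\ x = y + z).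

End SC.

From HB Require Import structures.
From mathcomp Require Import all_boot all_order all_algebra.
From mathcomp Require Import reals.
From Stdlib Require Import Classical.
Import Order.TTheory GRing.Theory Num.Theory.
Local Open Scope ring_scope.
Set Implicit Arguments. Unset Strict Implicit.

(* If N meets W nontrivially, a nonzero point of N /\ W lies in C and has all
   coordinates zero, so Sigma is everything and R^{Sigma^c} (+) W = W meets Nt
   only in 0. Otherwise pick a nonzero x in Nt /\ (R^{Sigma^c} (+) W); it has a
   nonzero coordinate. Sliding any v in N /\ C along -x or x until it reaches the
   boundary of C gives a point of N /\ C vanishing where x does not, which is
   impossible unless v is a multiple of x. As N /\ C has interior in N, this
   forces N = Nt = R x. Finally, if some nonzero a in N /\ C had a_i = 0, every
   point of N would vanish at i; stability of C under small perturbations of a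
   by the sc-complement makes the complement vanish at i too, so the two could
   not span E. *)

Section GoodPosition.
Variables (R : realType) (n : nat) (W : lmodType R) (sc : sc_structure W).
Local Notation ET := (@E R n W).
Local Notation Enorm := (Enorm sc).

Lemma coordD (x y : ET) i : (x + y).1 ord0 i = x.1 ord0 i + y.1 ord0 i.
Proof. by rewrite /= mxE. Qed.

Lemma coordZ (t : R) (x : ET) i : (t *: x).1 ord0 i = t * x.1 ord0 i.
Proof. by rewrite /= mxE. Qed.

Lemma rvnormZ (t : R) (r : 'rV[R]_n) : rvnorm (t *: r) = `|t| * rvnorm r.
Proof.
rewrite /rvnorm; elim/big_rec2: _ => [|i y1 y2 _ ->]; first by rewrite mulr0.
by rewrite mxE normrM maxr_pMr.
Qed.

Lemma EnormZ (t : R) (p : ET) : Enorm (t *: p) = `|t| * Enorm p.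
Proof.
have [_ [_ [nrmZ _]]] := sc_normP sc 0.
rewrite /Enorm /Enrm /= rvnormZ nrmZ; last exact: sc_lvl0.
by rewrite maxr_pMr.
Qed.

Lemma Enorm_ge0 (p : ET) : 0 <= Enorm p.
Proof.
have [nrm_ge0 _] := sc_normP sc 0.
by rewrite /Enorm /Enrm le_max (nrm_ge0 _ (sc_lvl0 sc _)) orbT.
Qed.

Lemma Enorm_eq0 (p : ET) : Enorm p = 0 -> p = 0.
Proof.
have [nrm_ge0 [nrm_eq0 _]] := sc_normP sc 0.
move=> /eqP; rewrite /Enorm /Enrm eq_le le_max ge_max => /andP[/andP[r0 w0] _].
case: p r0 w0 => r w /= r0 w0; congr (_, _).
  apply/rowP => i; rewrite mxE; apply/eqP; rewrite -normr_le0.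
  by apply: le_trans r0; apply: le_bigmax.
apply: nrm_eq0; first exact: sc_lvl0.
by apply/eqP; rewrite eq_le w0 (nrm_ge0 _ (sc_lvl0 sc _)).
Qed.

Lemma Enorm_gt0 (p : ET) : p <> 0 -> 0 < Enorm p.
Proof.
by move=> p0; rewrite lt_neqAle Enorm_ge0 andbT eq_sym; apply/eqP=> /Enorm_eq0.
Qed.

Lemma small_multiple (eps : R) (b : ET) :
  0 < eps -> exists2 t : R, 0 < t & Enorm (t *: b) < eps.
Proof.
move=> eps0; have b0 := Enorm_ge0 b.
have b1 : 0 < Enorm b + 1 by rewrite ltr_pwDr.
exists (eps / (Enorm b + 1)); first by rewrite divr_gt0.
rewrite EnormZ gtr0_norm ?divr_gt0 // mulrAC ltr_pdivrMr //.
by rewrite ltr_pM2l // ltrDl.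
Qed.

Lemma exists_coord_neq0 (x : ET) : ~ inW x -> exists j, x.1 ord0 j != 0.
Proof.
move=> xW; apply: NNPP => coords0; apply: xW; apply/rowP => i.
rewrite mxE; apply/eqP; apply: contra_notT coords0 => xi; by exists i.
Qed.

Definition Cone_has_interior (N : ET -> Prop) : Prop :=
  exists a, N a /\ Cone a /\ exists eps : R, 0 < eps /\
    forall b, N b -> Enorm (b - a) < eps -> Cone b.

Section Subspace.
Variable N : ET -> Prop.
Hypothesis N_sub : is_lsubspace N.

Lemma RSigmac_W_inW (z x : ET) :
  N z -> inW z -> z <> 0 -> RSigmac_W N x -> inW x.
Proof.
move=> Nz Wz z0 xR; apply/rowP => i; rewrite mxE; apply: xR.
by exists z; rewrite /Cone /sigma Wz; split=> [k|]; rewrite ?mxE.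
Qed.

Lemma Cone_multiple_of_neg_coord (y v : ET) j :
  N y -> RSigmac_W N y -> y.1 ord0 j < 0 -> N v -> Cone v ->
  exists s : R, v = s *: y.
Proof.
have [_ [ND NZ]] := N_sub.
move=> Ny yR yj Nv Cv.
pose ratio i := v.1 ord0 i / - y.1 ord0 i.
have [k yk ratio_min] := arg_minP ratio (yj : (fun i => y.1 ord0 i < 0) j).
set t := ratio k in ratio_min.
have t_ge0 : 0 <= t by rewrite divr_ge0 ?Cv // oppr_ge0 ltW.
set b := v + t *: y.
have [b0|b_neq0] := eqVneq b 0.
  by exists (- t); apply/eqP; rewrite scaleNr -addr_eq0 -/b b0.
have Cb : Cone b.
  move=> i; rewrite coordD coordZ; have [yi|yi] := ltP (y.1 ord0 i) 0.
    have := ratio_min i yi; rewrite ler_pdivlMr ?oppr_gt0 // mulrN.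
    by rewrite -lerBlDr sub0r.
  by rewrite addr_ge0 ?Cv // mulr_ge0.
have bk : b.1 ord0 k = 0.
  by rewrite coordD coordZ /t /ratio invrN mulrN mulNr divfK ?subrr ?lt_eqF.
have Nb : N b by apply: ND => //; apply: NZ.
have Sk : Sigma N k by exists b; do !split=> //; apply/eqP.
by move: (yR k Sk) => /eqP; rewrite lt_eqF.
Qed.

Lemma Cone_multiple_of_coord (y v : ET) j :
  N y -> RSigmac_W N y -> y.1 ord0 j != 0 -> N v -> Cone v ->
  exists s : R, v = s *: y.
Proof.
have [_ [_ NZ]] := N_sub.
move=> Ny yR yj Nv Cv; have [yj_lt0|yj_ge0] := ltP (y.1 ord0 j) 0.
  exact: Cone_multiple_of_neg_coord yR yj_lt0 Nv Cv.
have my_R : RSigmac_W N ((-1) *: y) by move=> i Si; rewrite coordZ yR ?mulr0.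
have my_j : ((-1) *: y).1 ord0 j < 0.
  by rewrite coordZ mulN1r oppr_lt0 lt_neqAle eq_sym yj.
have [s ->] := Cone_multiple_of_neg_coord (NZ _ _ Ny) my_R my_j Nv Cv.
by exists (s * -1); rewrite scalerA.
Qed.

Lemma line_of_Cone_line (x : ET) : Cone_has_interior N ->
  (forall v, N v -> Cone v -> exists s : R, v = s *: x) ->
  forall b, N b -> exists s : R, b = s *: x.
Proof.
have [_ [ND NZ]] := N_sub.
move=> [a [Na [Ca [eps [eps0 a_interior]]]]] Cone_line b Nb.
have [s0 a_eq] := Cone_line a Na Ca.
have [t t0 tb_small] := small_multiple b eps0.
have [s1 ab_eq] : exists s1 : R, a + t *: b = s1 *: x.
  apply: Cone_line; first by apply: ND => //; apply: NZ.
  by apply: a_interior; [apply: ND => //; apply: NZ | rewrite addrC addKr].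
exists (t^-1 * (s1 - s0)).
by rewrite -scalerA scalerBl -ab_eq -a_eq addrC addKr scalerA mulVf ?scale1r ?gt_eqF.
Qed.

End Subspace.

Lemma complement_coord_eq0 (N Np : ET -> Prop) (c : R) (a m : ET) i :
  is_lsubspace Np -> 0 < c ->
  (forall x y, N x -> Np y -> Enorm y <= c * Enorm x -> (Cone (x + y) <-> Cone x)) ->
  N a -> Cone a -> a <> 0 -> a.1 ord0 i = 0 -> Np m -> m.1 ord0 i = 0.
Proof.
move=> [_ [_ NpZ]] c0 Cone_stable Na Ca a0 ai Npm.
have [t t0 tm_small] := small_multiple m (mulr_gt0 c0 (Enorm_gt0 a0)).
have shift_ge0 s : Enorm (s *: m) <= c * Enorm a -> 0 <= s * m.1 ord0 i.
  move=> small; have /(_ i) := (Cone_stable a (s *: m) Na (NpZ s m Npm) small).2 Ca.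
  by rewrite coordD coordZ ai add0r.
have ge0 := shift_ge0 t (ltW tm_small).
have := shift_ge0 (- t); rewrite EnormZ normrN -EnormZ mulNr oppr_ge0.
move=> /(_ (ltW tm_small)) le0.
have /eqP : t * m.1 ord0 i = 0 by apply/eqP; rewrite eq_le le0 ge0.
by rewrite mulf_eq0 gt_eqF //= => /eqP.
Qed.

Lemma no_top_dsum_in_coord_hyperplane (A B : ET -> Prop) i :
  top_dsum_lvl sc 0 A B ->
  (forall x, A x -> x.1 ord0 i = 0) -> (forall y, B y -> y.1 ord0 i = 0) -> False.
Proof.
move=> [decomp _] A0 B0.
have [a [b [Aa [_ [Bb [_ e_eq]]]]]] := decomp ((delta_mx ord0 i, 0) : ET) (sc_lvl0 sc _).
have : (a + b).1 ord0 i = 1 by rewrite -e_eq mxE !eqxx.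
by rewrite coordD A0 // B0 // addr0 => /eqP; rewrite eq_sym oner_eq0.
Qed.

Lemma Sigma_empty_of_line (N : ET -> Prop) (x : ET) : good_position sc N ->
  (forall b, N b -> exists s : R, b = s *: x) -> forall i, ~ Sigma N i.
Proof.
move=> [_ [Np [c [[_ [[Np_sub _] dsum]] [c0 Cone_stable]]]]] line i.
move=> [a [Ca [Na [a0 ai]]]].
have xi : x.1 ord0 i = 0.
  have [s a_eq] := line a Na; move: ai; rewrite /sigma a_eq coordZ => /eqP.
  rewrite mulf_eq0 => /orP[/eqP s0|/eqP //].
  by case: a0; rewrite a_eq s0 scale0r.
apply: (no_top_dsum_in_coord_hyperplane (i := i) (dsum 0)).
  by move=> b /line[s ->]; rewrite coordZ xi mulr0.
by move=> m; apply: complement_coord_eq0 Np_sub c0 Cone_stable Na Ca a0 ai.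
Qed.

End GoodPosition.

Theorem lemma6p9 (R : realType) (n : nat) (W : lmodType R)
  (sc : sc_structure W) (N Nt : @E R n W -> Prop) :
  is_lsubspace N -> finite_dim N -> good_position sc N ->
  alg_complement (fun x => N x /\ inW x) N Nt ->
  (forall x, Nt x -> RSigmac_W N x -> x = 0) \/
  ((forall x, Nt x -> RSigmac_W N x) /\
   (exists v : @E R n W, v <> 0 /\ forall x, Nt x <-> exists t : R, x = t *: v) /\
   (forall i : 'I_n, ~ Sigma N i)).
Proof.
move=> N_sub _ gp [Nt_sub [NtN [Nt_W _]]].
have [[z [Nz [Wz z0]]]|NW0] := classic (exists z, N z /\ inW z /\ z <> 0).
  left=> x Ntx /(RSigmac_W_inW Nz Wz z0) Wx.
  exact: Nt_W Ntx (conj (NtN _ Ntx) Wx).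
have [[x [Ntx [xR x0]]]|Nt_R0] := classic (exists x, Nt x /\ RSigmac_W N x /\ x <> 0);
  last first.
  left=> x Ntx xR; have [//|/eqP x0] := eqVneq x 0.
  by case: Nt_R0; exists x.
right.
have Nx := NtN _ Ntx.
have [j xj] : exists j, x.1 ord0 j != 0.
  by apply: exists_coord_neq0 => Wx; apply: NW0; exists x.
have line : forall b, N b -> exists s : R, b = s *: x.
  exact: (line_of_Cone_line N_sub gp.1 (fun v => Cone_multiple_of_coord N_sub Nx xR xj)).
have Sigma0 := Sigma_empty_of_line gp line.
split; first by move=> y _ i /Sigma0.
split=> //; exists x; split=> // y; split=> [/NtN/line //|[t ->]].
by have [_ [_ NtZ]] := Nt_sub; apply: NtZ.
Qed.
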